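(* Let $d\ge5$ and let $Z=[z_1|\cdots|z_{2d}]$ be a totally positive real $4\times 2d$ matrix, with $M_i=\mathrm{span}(z_{2i-1},z_{2i})$ for $i=1,\dots,d$. Let $L^+$ and $L^-$ be the two lines in $\mathbb{P}^3$ meeting all of $M_1,M_2,M_3,M_4$. Then each of the configurations $(L^+,M_5,\dots,M_d)$ and $(L^-,M_5,\dots,M_d)$ is a positive configuration of lines; i.e. the four-mass box substitution maps $(M_1,\dots,M_d)\mapsto(L^\pm,M_5,\dots,M_d)$ are copositive.
   Context: A real $4\times n$ matrix is totally positive if all its $4\times4$ minors are positive. A tuple of lines $(N_1,\dots,N_m)$ in $\mathbb{P}^3$ is positive if there exist a totally positive $4\times n$ matrix $[y_1|\cdots|y_n]$ and indices $1=p_1<\dots<p_m\le n\le 2m$ with $N_i=\mathrm{span}(y_{p_i},y_{p_i+1})$, and $p_{i+1}=p_i+1$ whenever $N_i,N_{i+1}$ meet. *)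

From HB Require Import structures.
From mathcomp Require Import all_boot all_order all_algebra.
From mathcomp Require Import reals.

Set Implicit Arguments.
Unset Strict Implicit.
Unset Printing Implicit Defensive.

Import Order.TTheory GRing.Theory Num.Theory.
Local Open Scope ring_scope.

(* Points of P^3 are nonzero row vectors of R^4 up to scaling; a line in P^3
   is the row space of a 2 x 4 matrix of rank 2. *)

(* Entry in row k of the j-th column (0-based, nat index) of Y; 0 if j is out
   of range (never used out of range in the definitions below). *)
Definition ent (R : realFieldType) (n : nat) (Y : 'M[R]_(4, n)) (k : 'I_4)
    (j : nat) : R :=
  match (insub j : option 'I_n) with Some o => Y k o | None => 0 end.

Definition span2 (R : realFieldType) (n : nat) (Y : 'M[R]_(4, n))
    (j j' : nat) : 'M[R]_(2, 4) :=
  \matrix_(r < 2, k < 4) (if val r == 0%N then ent Y k j else ent Y k j').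

Definition totally_positive (R : realFieldType) (n : nat) (Y : 'M[R]_(4, n))
  : Prop :=
  forall f : 'I_4 -> 'I_n,
    (forall i j : 'I_4, (i < j)%N -> (f i < f j)%N) -> 0 < \det (colsub f Y).

Definition lines_meet (R : realFieldType) (A B : 'M[R]_(2, 4)) : Prop :=
  (0 < \rank (A :&: B)%MS)%N.

Definition positive_config (R : realFieldType) (m : nat)
    (N : nat -> 'M[R]_(2, 4)) : Prop :=
  exists (n : nat) (Y : 'M[R]_(4, n)) (p : nat -> nat),
    totally_positive Y /\
    ((0 < m)%N -> p 0%N = 0%N) /\
    (forall i, (i.+1 < m)%N -> (p i < p i.+1)%N) /\
    (forall i, (i < m)%N -> ((p i).+1 < n)%N) /\
    (n <= 2 * m)%N /\
    (forall i, (i < m)%N -> (N i == span2 Y (p i) (p i).+1)%MS) /\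
    (forall i, (i.+1 < m)%N -> lines_meet (N i) (N i.+1) ->
               p i.+1 = (p i).+1).

From HB Require Import structures.
From mathcomp Require Import all_boot all_order all_algebra.
From mathcomp Require Import reals ring lra zify.
From Stdlib Require Import FunctionalExtensionality.

(* Let a1 and a4 be the points where L meets M1 = span(z0, z1) and M4 = span(z6, z7),
   scaled suitably.  Then L = span(a1, a4), and (L, M5, ..., Md) is realized by the
   matrix Y = [a1 | a4 | z8 | ... | z_{2d-1}] with p_i = 2i; consecutive column pairs of
   a totally positive matrix never meet, so it suffices that Y is totally positive.
   A point x of M4 lies on a line meeting M1, M2, M3 exactly when a quadratic form
   Q(x) in the brackets of x vanishes.  If a minor <a4 z_a z_b z_c> or <a4 z0 z1 z_w>
   were nonpositive, a chain of three-term Plücker inequalities would make seven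
   brackets <z_i z_j z_k a4> negative, and two Plücker identities then force
   Q(a4) > 0.  The minors through a1 follow by the twisted reversal of the columns,
   which exchanges M1 and M4, and those through both a1 and a4 from one more
   Plücker identity. *)

Set Implicit Arguments.
Unset Strict Implicit.
Unset Printing Implicit Defensive.

Import Order.TTheory GRing.Theory Num.Theory.
Local Open Scope ring_scope.

Section BracketDefs.
Variable R : realFieldType.

(* Vectors of R^4; only the values at 0, 1, 2, 3 matter. *)
Definition vec := nat -> R.

Definition det3 (b c d : vec) (r1 r2 r3 : nat) : R :=
  b r1 * (c r2 * d r3 - c r3 * d r2) - b r2 * (c r1 * d r3 - c r3 * d r1)
  + b r3 * (c r1 * d r2 - c r2 * d r1).

Definition det4 (a b c d : vec) : R :=
  a 0%N * det3 b c d 1 2 3 - a 1%N * det3 b c d 0 2 3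
  + a 2%N * det3 b c d 0 1 3 - a 3%N * det3 b c d 0 1 2.

Definition lincomb (l m : R) (v w : vec) : vec := fun k => l * v k + m * w k.

Definition oppv (v : vec) : vec := fun k => - v k.

Definition br (z : nat -> vec) (i j k l : nat) : R := det4 (z i) (z j) (z k) (z l).

Definition tp_seq (z : nat -> vec) (n : nat) : Prop :=
  forall i j k l, (i < j)%N -> (j < k)%N -> (k < l)%N -> (l < n)%N -> 0 < br z i j k l.

End BracketDefs.

Ltac bracket_ring := rewrite /br /det4 /det3 /lincomb /oppv; ring.

Section Brackets.
Variable R : realFieldType.

Lemma tp_seq_le (z : nat -> vec R) m n : (m <= n)%N -> tp_seq z n -> tp_seq z m.
Proof. by move=> mn TP i j k l ij jk kl lm; apply: TP => //; apply: leq_trans mn. Qed.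

(* [a6 / a7 < b6 / b7], cleared of the (positive) denominators. *)
Definition ratio_lt (a6 a7 b6 b7 : R) : Prop := a6 * b7 < b6 * a7.

Lemma ratio_lt_trans (a6 a7 b6 b7 c6 c7 : R) : 0 < a7 -> 0 < b7 -> 0 < c7 ->
  ratio_lt a6 a7 b6 b7 -> ratio_lt b6 b7 c6 c7 -> ratio_lt a6 a7 c6 c7.
Proof. by rewrite /ratio_lt => a7p b7p c7p ab bc; rewrite -(ltr_pM2r b7p); nra. Qed.

Lemma ratio_lt_of_le_lt_le (p1 q1 p2 q2 p3 q3 p4 q4 : R) :
  0 < q1 -> 0 < q2 -> 0 < q3 -> 0 < q4 ->
  p1 * q2 <= p2 * q1 -> ratio_lt p2 q2 p3 q3 -> p3 * q4 <= p4 * q3 -> ratio_lt p1 q1 p4 q4.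
Proof.
rewrite /ratio_lt => q1p q2p q3p q4p h12 h23 h34.
rewrite -(ltr_pM2r (mulr_gt0 q2p q3p)).
have k1 := ler_wpM2r (ltW (mulr_gt0 q3p q4p)) h12.
have k2 := ltr_pM2r (mulr_gt0 q1p q4p) (p2 * q3) (p3 * q2).
have k3 := ler_wpM2r (ltW (mulr_gt0 q1p q2p)) h34.
by rewrite h23 in k2; lra.
Qed.

Lemma ratio_lt_of_plucker (a6 a7 b6 b7 P Q : R) :
  a6 * b7 - b6 * a7 = - (P * Q) -> 0 < P -> 0 < Q -> ratio_lt a6 a7 b6 b7.
Proof. by rewrite /ratio_lt => e Pp Qp; rewrite -subr_lt0 e oppr_lt0 mulr_gt0. Qed.

(* Seen from x, the lines span(z0, z1) and span(z2, z3) cross at the image of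
   <z0 z1 z3 x> z2 - <z0 z1 z2 x> z3; the form vanishes when this point lies on
   span(z4, z5), i.e. when a line through x meets all three lines. *)
Definition transversal_form (z : nat -> vec R) (x : vec R) : R :=
  det4 (z 0%N) (z 1%N) (z 3%N) x * det4 (z 2%N) (z 4%N) (z 5%N) x
  - det4 (z 0%N) (z 1%N) (z 2%N) x * det4 (z 3%N) (z 4%N) (z 5%N) x.

Definition transversal_triples : seq (nat * nat * nat) :=
  [:: (0, 1, 2); (0, 1, 4); (0, 2, 3); (0, 2, 4); (0, 4, 5); (2, 3, 4); (2, 4, 5)]%N.

Lemma transversal_triples_lt (i j k : nat) : (i, j, k) \in transversal_triples ->
  [&& i < j, j < k & k < 6]%N.
Proof. by rewrite !inE; repeat case/orP; move=> /eqP [-> -> ->]. Qed.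

Lemma plucker_0_1234 (a0 a1 a2 a3 a4 x : vec R) :
  det4 a0 a1 a3 x * det4 a0 a2 a4 x =
  det4 a0 a1 a2 x * det4 a0 a3 a4 x + det4 a0 a1 a4 x * det4 a0 a2 a3 x.
Proof. bracket_ring. Qed.

Lemma plucker_4_0235 (a0 a2 a3 a4 a5 x : vec R) :
  det4 a0 a3 a4 x * det4 a2 a4 a5 x - det4 a0 a2 a4 x * det4 a3 a4 a5 x =
  det4 a0 a4 a5 x * det4 a2 a3 a4 x.
Proof. bracket_ring. Qed.

Lemma transversal_sign_gt0 (b012 b013 b014 b023 b024 b034 b045 b234 b245 b345 : R) :
  b013 * b024 = b012 * b034 + b014 * b023 ->
  b034 * b245 - b024 * b345 = b045 * b234 ->
  b012 < 0 -> b014 < 0 -> b023 < 0 -> b024 < 0 -> b045 < 0 -> b234 < 0 -> b245 < 0 ->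
  0 < b013 * b245 - b012 * b345.
Proof.
move=> e1 e2 n012 n014 n023 n024 n045 n234 n245.
have e : b024 * (b013 * b245 - b012 * b345) = b012 * (b045 * b234) + b014 * b023 * b245.
  by rewrite -e2 mulrBr !mulrA [b024 * b013]mulrC e1; ring.
have : b024 * (b013 * b245 - b012 * b345) < 0.
  have q1 : 0 < b045 * b234 by rewrite nmulr_rgt0.
  have q2 : 0 < b014 * b023 by rewrite nmulr_rgt0.
  have p1 : b012 * (b045 * b234) < 0 by rewrite pmulr_llt0.
  have p2 : b014 * b023 * b245 < 0 by rewrite pmulr_rlt0.
  by rewrite e; lra.
by rewrite nmulr_rlt0.
Qed.

Lemma transversal_form_gt0 (z : nat -> vec R) (x : vec R) :
  (forall i j k, (i, j, k) \in transversal_triples -> det4 (z i) (z j) (z k) x < 0) ->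
  0 < transversal_form z x.
Proof.
move=> neg; exact: transversal_sign_gt0 (plucker_0_1234 _ _ _ _ _ _)
  (plucker_4_0235 _ _ _ _ _ _) (neg 0%N 1%N 2%N isT) (neg 0%N 1%N 4%N isT)
  (neg 0%N 2%N 3%N isT) (neg 0%N 2%N 4%N isT) (neg 0%N 4%N 5%N isT)
  (neg 2%N 3%N 4%N isT) (neg 2%N 4%N 5%N isT).
Qed.

Lemma transversal_ratios_lt (z : nat -> vec R) (t6 t7 : R) : tp_seq z 8 -> 0 < t7 ->
  ratio_lt (br z 0 1 2 6) (br z 0 1 2 7) t6 t7 ->
  forall i j k, (i, j, k) \in transversal_triples ->
  ratio_lt (br z i j k 6) (br z i j k 7) t6 t7.
Proof.
move=> TP t7p r012 i j k.
have r014 : ratio_lt (br z 0 1 4 6) (br z 0 1 4 7) (br z 0 1 2 6) (br z 0 1 2 7).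
  by apply: (ratio_lt_of_plucker (P := br z 0 1 2 4) (Q := br z 0 1 6 7));
    [bracket_ring | apply: TP ..].
have r023 : ratio_lt (br z 0 2 3 6) (br z 0 2 3 7) (br z 0 1 2 6) (br z 0 1 2 7).
  by apply: (ratio_lt_of_plucker (P := br z 0 1 2 3) (Q := br z 0 2 6 7));
    [bracket_ring | apply: TP ..].
have r024 : ratio_lt (br z 0 2 4 6) (br z 0 2 4 7) (br z 0 1 2 6) (br z 0 1 2 7).
  by apply: (ratio_lt_of_plucker (P := br z 0 1 2 4) (Q := br z 0 2 6 7));
    [bracket_ring | apply: TP ..].
have r045 : ratio_lt (br z 0 4 5 6) (br z 0 4 5 7) (br z 0 1 4 6) (br z 0 1 4 7).
  by apply: (ratio_lt_of_plucker (P := br z 0 1 4 5) (Q := br z 0 4 6 7));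
    [bracket_ring | apply: TP ..].
have r234 : ratio_lt (br z 2 3 4 6) (br z 2 3 4 7) (br z 0 2 3 6) (br z 0 2 3 7).
  by apply: (ratio_lt_of_plucker (P := br z 0 2 3 4) (Q := br z 2 3 6 7));
    [bracket_ring | apply: TP ..].
have r245 : ratio_lt (br z 2 4 5 6) (br z 2 4 5 7) (br z 0 2 4 6) (br z 0 2 4 7).
  by apply: (ratio_lt_of_plucker (P := br z 0 2 4 5) (Q := br z 2 4 6 7));
    [bracket_ring | apply: TP ..].
rewrite !inE; repeat case/orP; move=> /eqP [-> -> ->] //;
  apply: ratio_lt_trans r012 => //; try by apply: TP.
- by apply: ratio_lt_trans r014 => //; apply: TP.
- by apply: ratio_lt_trans r023 => //; apply: TP.
- by apply: ratio_lt_trans r024 => //; apply: TP.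
Qed.

Lemma lincomb_lt0_of_ratio_lt (s6 s7 t6 t7 l m : R) : 0 < s7 -> 0 < t7 ->
  ratio_lt s6 s7 t6 t7 -> 0 <= l -> (l != 0) || (m != 0) ->
  l * t6 + m * t7 <= 0 -> l * s6 + m * s7 < 0.
Proof.
rewrite /ratio_lt => s7p t7p st l0 lm0 lt0.
have [l0' | ln0] := eqVneq l 0.
  move: lm0 lt0; rewrite l0' eqxx /= !mul0r !add0r => m0 mt0.
  by rewrite pmulr_llt0 // lt_neqAle m0 -(pmulr_lle0 _ t7p).
have lp : 0 < l by rewrite lt_def ln0.
rewrite -(pmulr_llt0 _ t7p).
have -> : (l * s6 + m * s7) * t7 = l * (s6 * t7 - t6 * s7) + s7 * (l * t6 + m * t7) by ring.
have : l * (s6 * t7 - t6 * s7) < 0 by rewrite pmulr_rlt0 // subr_lt0.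
have : s7 * (l * t6 + m * t7) <= 0 by rewrite pmulr_rle0.
lra.
Qed.

(* Were the bracket nonpositive, the ratio inequalities would make all seven
   transversal brackets of the point negative, hence its transversal form positive. *)
Lemma transversal_point_bracket_gt0 (z : nat -> vec R) (t1 t2 t3 : vec R) (l m : R) :
  tp_seq z 8 -> 0 < det4 (z 7%N) t1 t2 t3 ->
  ratio_lt (br z 0 1 2 6) (br z 0 1 2 7) (det4 (z 6%N) t1 t2 t3) (det4 (z 7%N) t1 t2 t3) ->
  0 <= l -> (l != 0) || (m != 0) ->
  transversal_form z (lincomb l m (z 6%N) (z 7%N)) = 0 ->
  0 < det4 (lincomb l m (z 6%N) (z 7%N)) t1 t2 t3.
Proof.
move=> TP t7p r012 l0 lm0 Q0; rewrite ltNge; apply/negP => xt.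
suff : 0 < transversal_form z (lincomb l m (z 6%N) (z 7%N)) by rewrite Q0 ltxx.
apply: transversal_form_gt0 => i j k ijk.
have /and3P[ij jk k6] := transversal_triples_lt ijk.
have -> : det4 (z i) (z j) (z k) (lincomb l m (z 6%N) (z 7%N))
    = l * br z i j k 6 + m * br z i j k 7 by bracket_ring.
apply: (lincomb_lt0_of_ratio_lt _ t7p (transversal_ratios_lt TP t7p r012 ijk) l0 lm0).
  by apply: TP => //; apply: leq_trans k6 _.
by move: xt; congr (_ <= 0); bracket_ring.
Qed.

Section TransversalPoint.
Variables (z : nat -> vec R) (N : nat) (l m : R).
Hypotheses (TP : tp_seq z N) (l0 : 0 <= l) (lm0 : (l != 0) || (m != 0))
  (Q0 : transversal_form z (lincomb l m (z 6%N) (z 7%N)) = 0).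

Lemma transversal_point_minor01_gt0 w : (8 <= w)%N -> (w < N)%N ->
  0 < det4 (lincomb l m (z 6%N) (z 7%N)) (z 0%N) (z 1%N) (z w).
Proof.
move=> w8 wN; have TP8 : tp_seq z 8 := tp_seq_le (leq_trans w8 (ltnW wN)) TP.
have e6 : det4 (z 6%N) (z 0%N) (z 1%N) (z w) = br z 0 1 6 w by bracket_ring.
have e7 : det4 (z 7%N) (z 0%N) (z 1%N) (z w) = br z 0 1 7 w by bracket_ring.
apply: transversal_point_bracket_gt0 l0 lm0 Q0 => //; rewrite e7; first by apply: TP; lia.
rewrite e6; apply: (ratio_lt_of_plucker (P := br z 0 1 2 w) (Q := br z 0 1 6 7));
  [bracket_ring | apply: TP; lia ..].
Qed.

Lemma transversal_point_minor_gt0 a b c :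
  (8 <= a)%N -> (a < b)%N -> (b < c)%N -> (c < N)%N ->
  0 < det4 (lincomb l m (z 6%N) (z 7%N)) (z a) (z b) (z c).
Proof.
move=> a8 ab bc cN; have TP8 : tp_seq z 8 by apply: tp_seq_le TP; lia.
apply: transversal_point_bracket_gt0 l0 lm0 Q0 => //; first by apply: TP; lia.
have r01a : ratio_lt (br z 0 1 2 6) (br z 0 1 2 7) (br z 0 1 6 a) (br z 0 1 7 a).
  by apply: (ratio_lt_of_plucker (P := br z 0 1 2 a) (Q := br z 0 1 6 7));
    [bracket_ring | apply: TP; lia ..].
have r0ab : ratio_lt (br z 0 1 6 a) (br z 0 1 7 a) (br z 0 6 a b) (br z 0 7 a b).
  by apply: (ratio_lt_of_plucker (P := br z 0 1 a b) (Q := br z 0 6 7 a));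
    [bracket_ring | apply: TP; lia ..].
have rabc : ratio_lt (br z 0 6 a b) (br z 0 7 a b) (br z 6 a b c) (br z 7 a b c).
  by apply: (ratio_lt_of_plucker (P := br z 0 a b c) (Q := br z 6 7 a b));
    [bracket_ring | apply: TP; lia ..].
by apply: (ratio_lt_trans _ _ _ r01a); [..| apply: ratio_lt_trans r0ab rabc];
  apply: TP; lia.
Qed.

End TransversalPoint.

Lemma box_minor_gt0 (z : nat -> vec R) N a b (l m l' m' : R) :
  tp_seq z N -> (8 <= a)%N -> (a < b)%N -> (b < N)%N -> 0 <= l -> 0 <= l' ->
  0 < det4 (lincomb l' m' (z 6%N) (z 7%N)) (z 0%N) (z 1%N) (z a) ->
  0 < det4 (lincomb l' m' (z 6%N) (z 7%N)) (z 0%N) (z 1%N) (z b) ->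
  0 < det4 (lincomb m l (z 0%N) (z 1%N)) (z 6%N) (z 7%N) (z a) ->
  0 < det4 (lincomb m l (z 0%N) (z 1%N)) (z 6%N) (z 7%N) (z b) ->
  0 < det4 (lincomb m l (z 0%N) (z 1%N)) (lincomb l' m' (z 6%N) (z 7%N)) (z a) (z b).
Proof.
set x := lincomb m l _ _; set y := lincomb l' m' _ _.
move=> TP a8 ab bN.
have [p0167 p01ab p67ab p07ab] : [/\ 0 < br z 0 1 6 7, 0 < br z 0 1 a b,
  0 < br z 6 7 a b & 0 < br z 0 7 a b] by split; apply: TP; lia.
have [p017a p017b p067a p067b] : [/\ 0 < br z 0 1 7 a, 0 < br z 0 1 7 b,
  0 < br z 0 6 7 a & 0 < br z 0 6 7 b] by split; apply: TP; lia.
move=> l0 l'0 ya yb xa xb.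
have h1 : det4 y (z 0%N) (z 1%N) (z b) * br z 0 1 7 a
          <= br z 0 1 7 b * det4 y (z 0%N) (z 1%N) (z a).
  rewrite -subr_ge0 (_ : _ - _ = l' * (br z 0 1 6 7 * br z 0 1 a b));
    last by rewrite /y; bracket_ring.
  by rewrite mulr_ge0 // ltW // mulr_gt0.
have h2 : ratio_lt (br z 0 1 7 b) (br z 0 1 7 a) (br z 0 6 7 b) (br z 0 6 7 a).
  by apply: (ratio_lt_of_plucker (P := br z 0 1 6 7) (Q := br z 0 7 a b)); first bracket_ring.
have h3 : br z 0 6 7 b * det4 x (z 6%N) (z 7%N) (z a)
          <= det4 x (z 6%N) (z 7%N) (z b) * br z 0 6 7 a.
  rewrite -subr_ge0 (_ : _ - _ = l * (br z 0 1 6 7 * br z 6 7 a b));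
    last by rewrite /x; bracket_ring.
  by rewrite mulr_ge0 // ltW // mulr_gt0.
rewrite -(pmulr_rgt0 _ p0167).
rewrite (_ : _ * _ = det4 y (z 0%N) (z 1%N) (z a) * det4 x (z 6%N) (z 7%N) (z b)
                   - det4 y (z 0%N) (z 1%N) (z b) * det4 x (z 6%N) (z 7%N) (z a));
  last by rewrite /x /y; bracket_ring.
rewrite subr_gt0 [X in _ < X]mulrC.
exact: ratio_lt_of_le_lt_le h1 h2 h3.
Qed.

Definition spans_meet (r0 r1 p q : vec R) : Prop :=
  exists y y' c c', [/\ (y != 0) || (y' != 0), (c != 0) || (c' != 0)
                     & lincomb y y' r0 r1 = lincomb c c' p q].

Definition on_span (r0 r1 x : vec R) : Prop := exists y y', x = lincomb y y' r0 r1.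

Lemma eq0_of_scaled (e f Q : R) : (e != 0) || (f != 0) -> e * Q = 0 -> f * Q = 0 -> Q = 0.
Proof.
move=> /orP[nz | nz] /eqP eQ /eqP fQ; apply/eqP.
  by move: eQ; rewrite mulf_eq0 (negbTE nz).
by move: fQ; rewrite mulf_eq0 (negbTE nz).
Qed.

Lemma det2_eq0_of_kernel (e f A B C D : R) : (e != 0) || (f != 0) ->
  e * A + f * B = 0 -> e * C + f * D = 0 -> B * C - A * D = 0.
Proof.
move=> nz E1 E2; apply: (eq0_of_scaled nz).
  rewrite (_ : _ * _ = B * (e * C + f * D) - D * (e * A + f * B)); last by ring.
  by rewrite E1 E2 !mulr0 subr0.
rewrite (_ : _ * _ = C * (e * A + f * B) - A * (e * C + f * D)); last by ring.
by rewrite E1 E2 !mulr0 subr0.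
Qed.

Lemma spans_meet_det (r0 r1 p q : vec R) : spans_meet r0 r1 p q -> det4 r0 r1 p q = 0.
Proof.
case=> y [y' [c [c' [nz _ e]]]]; apply: (eq0_of_scaled nz).
  transitivity (det4 (lincomb y y' r0 r1) r1 p q); first by bracket_ring.
  by rewrite e; bracket_ring.
transitivity (- det4 (lincomb y y' r0 r1) r0 p q); first by bracket_ring.
by rewrite e; bracket_ring.
Qed.

Lemma spans_meet_opp_swap (r0 r1 p q : vec R) :
  spans_meet r0 r1 p q -> spans_meet r0 r1 (oppv q) (oppv p).
Proof.
case=> y [y' [c [c' [nzy nzc e]]]]; exists y, y', (- c'), (- c); split => //.
  by rewrite !oppr_eq0 orbC.
by rewrite e; apply: functional_extensionality => k; rewrite /lincomb /oppv; ring.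
Qed.

Lemma spans_meet_nonneg_point (r0 r1 p q : vec R) : spans_meet r0 r1 p q ->
  exists l m, [/\ 0 <= l, (l != 0) || (m != 0) & on_span r0 r1 (lincomb l m p q)].
Proof.
case=> y [y' [c [c' [_ nzc e]]]].
have [c0 | c0] := lerP 0 c; first by exists c, c'; split => //; exists y, y'.
exists (- c), (- c'); split; [by rewrite oppr_ge0 ltW | by rewrite !oppr_eq0 |].
exists (- y), (- y'); apply: functional_extensionality => k.
by have := congr1 (fun v => v k) e; rewrite /lincomb !mulNr -!opprD => ->.
Qed.

Lemma transversal_form_eq0 (z : nat -> vec R) (r0 r1 x : vec R) :
  spans_meet r0 r1 (z 0%N) (z 1%N) -> spans_meet r0 r1 (z 2%N) (z 3%N) ->
  spans_meet r0 r1 (z 4%N) (z 5%N) -> on_span r0 r1 x -> transversal_form z x = 0.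
Proof.
move=> /spans_meet_det d01 [y [y' [e [f [_ nz ew]]]]] /spans_meet_det d45 [a [b ->]].
apply: (det2_eq0_of_kernel nz).
  transitivity (det4 (z 0%N) (z 1%N) (lincomb e f (z 2%N) (z 3%N)) (lincomb a b r0 r1));
    first by bracket_ring.
  by rewrite -ew -[RHS](mulr0 (y * b - y' * a)) -d01; bracket_ring.
transitivity (det4 (lincomb e f (z 2%N) (z 3%N)) (z 4%N) (z 5%N) (lincomb a b r0 r1));
  first by bracket_ring.
by rewrite -ew -[RHS](mulr0 (y * b - y' * a)) -d45; bracket_ring.
Qed.

(* Reverses z_0, ..., z_{m-1} and z_m, ..., z_{n-1} and negates the first block.  For
   m = 8 it exchanges span(z0, z1) with span(z6, z7) and span(z2, z3) with span(z4, z5). *)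
Definition twist (z : nat -> vec R) (m n : nat) : nat -> vec R :=
  fun i => if (i < m)%N then oppv (z (m - i.+1)%N) else z (n + m - i.+1)%N.

Lemma tp_seq_twist (z : nat -> vec R) m n :
  (m <= n)%N -> tp_seq z n -> tp_seq (twist z m n) n.
Proof.
move=> mn TP i j k l ij jk kl ln; rewrite /br /twist.
have [lm | ml] := ltnP l m.
  have [im jm km] : [/\ i < m, j < m & k < m]%N by split; lia.
  rewrite im jm km (_ : det4 _ _ _ _ = br z (m - l.+1) (m - k.+1) (m - j.+1) (m - i.+1));
    [apply: TP; lia | bracket_ring].
have [km | mk] := ltnP k m.
  have [im jm] : (i < m)%N /\ (j < m)%N by split; lia.
  rewrite im jm (_ : det4 _ _ _ _ = br z (m - k.+1) (m - j.+1) (m - i.+1) (n + m - l.+1));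
    [apply: TP; lia | bracket_ring].
have [jm | mj] := ltnP j m.
  have im : (i < m)%N by lia.
  rewrite im (_ : det4 _ _ _ _ = br z (m - j.+1) (m - i.+1) (n + m - l.+1) (n + m - k.+1));
    [apply: TP; lia | bracket_ring].
have [im | mi] := ltnP i m.
  rewrite (_ : det4 _ _ _ _ = br z (m - i.+1) (n + m - l.+1) (n + m - k.+1) (n + m - j.+1));
    [apply: TP; lia | bracket_ring].
rewrite (_ : det4 _ _ _ _ = br z (n + m - l.+1) (n + m - k.+1) (n + m - j.+1) (n + m - i.+1));
  [apply: TP; lia | bracket_ring].
Qed.

Definition transversal4 (r0 r1 : vec R) (z : nat -> vec R) : Prop :=
  [/\ spans_meet r0 r1 (z 0%N) (z 1%N), spans_meet r0 r1 (z 2%N) (z 3%N),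
      spans_meet r0 r1 (z 4%N) (z 5%N) & spans_meet r0 r1 (z 6%N) (z 7%N)].

Lemma transversal4_twist (r0 r1 : vec R) (z : nat -> vec R) n :
  transversal4 r0 r1 z -> transversal4 r0 r1 (twist z 8 n).
Proof. by case=> T0 T1 T2 T3; split; apply: spans_meet_opp_swap. Qed.

Lemma box_point67 (z : nat -> vec R) N (r0 r1 : vec R) :
  tp_seq z N -> transversal4 r0 r1 z ->
  exists l m, [/\ 0 <= l, on_span r0 r1 (lincomb l m (z 6%N) (z 7%N)),
    forall a b c, (8 <= a)%N -> (a < b)%N -> (b < c)%N -> (c < N)%N ->
      0 < det4 (lincomb l m (z 6%N) (z 7%N)) (z a) (z b) (z c)
  & forall w, (8 <= w)%N -> (w < N)%N ->
      0 < det4 (lincomb l m (z 6%N) (z 7%N)) (z 0%N) (z 1%N) (z w)].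
Proof.
move=> TP T; have [T0 T1 T2 /spans_meet_nonneg_point[l [m [l0 lm0 xL]]]] := T.
have Q0 := transversal_form_eq0 T0 T1 T2 xL.
exists l, m; split => //.
  exact: transversal_point_minor_gt0 TP l0 lm0 Q0.
exact: transversal_point_minor01_gt0 TP l0 lm0 Q0.
Qed.

Lemma box_point01 (z : nat -> vec R) N (r0 r1 : vec R) :
  (8 <= N)%N -> tp_seq z N -> transversal4 r0 r1 z ->
  exists l m, [/\ 0 <= l, on_span r0 r1 (lincomb m l (z 0%N) (z 1%N)),
    forall a b c, (8 <= a)%N -> (a < b)%N -> (b < c)%N -> (c < N)%N ->
      0 < det4 (lincomb m l (z 0%N) (z 1%N)) (z a) (z b) (z c)
  & forall w, (8 <= w)%N -> (w < N)%N ->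
      0 < det4 (lincomb m l (z 0%N) (z 1%N)) (z 6%N) (z 7%N) (z w)].
Proof.
move=> N8 TP T.
have [l [m [l0 [y [y' xL]] abc w01]]] :=
  box_point67 (tp_seq_twist N8 TP) (transversal4_twist N T).
have tw i : (8 <= i)%N -> (i < N)%N -> twist z 8 N (N + 7 - i) = z i.
  by move=> i8 iN; rewrite /twist ifN; [congr z; lia | rewrite -leqNgt; lia].
have [tw0 tw1 tw6 tw7] : [/\ twist z 8 N 0 = oppv (z 7%N), twist z 8 N 1 = oppv (z 6%N),
  twist z 8 N 6 = oppv (z 1%N) & twist z 8 N 7 = oppv (z 0%N)] by [].
rewrite tw6 tw7 in xL abc w01; set x := lincomb l m _ _ in xL abc w01.
exists l, m; split => //.
- exists (- y), (- y'); apply: functional_extensionality => k.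
  have := congr1 (fun v => v k) xL; rewrite /x /lincomb /oppv => e.
  by rewrite !mulNr -!opprD -e; ring.
- move=> a b c a8 ab bc cN.
  have pos : 0 < det4 x (twist z 8 N (N + 7 - c)) (twist z 8 N (N + 7 - b))
                        (twist z 8 N (N + 7 - a)) by apply: abc; lia.
  rewrite !tw in pos; [|lia ..].
  by rewrite (_ : det4 _ _ _ _ = det4 x (z c) (z b) (z a)) // /x; bracket_ring.
- move=> w w8 wN.
  have pos : 0 < det4 x (twist z 8 N 0) (twist z 8 N 1) (twist z 8 N (N + 7 - w)).
    by apply: w01; lia.
  rewrite tw0 tw1 tw in pos; [|lia ..].
  rewrite (_ : det4 _ _ _ _ = det4 x (oppv (z 7%N)) (oppv (z 6%N)) (z w)) //.
  by rewrite /x; bracket_ring.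
Qed.

Definition box_cols (a1 a4 : vec R) (z : nat -> vec R) : nat -> vec R :=
  fun j => if j == 0%N then a1 else if j == 1%N then a4 else z (j + 6)%N.

Lemma box_cols_ge2 (a1 a4 : vec R) (z : nat -> vec R) j :
  (2 <= j)%N -> box_cols a1 a4 z j = z (j + 6)%N.
Proof. by case: j => [|[|j]]. Qed.

Lemma tp_seq_box_cols (a1 a4 : vec R) (z : nat -> vec R) N : tp_seq z N ->
  (forall a b c, (8 <= a)%N -> (a < b)%N -> (b < c)%N -> (c < N)%N ->
     0 < det4 a1 (z a) (z b) (z c)) ->
  (forall a b c, (8 <= a)%N -> (a < b)%N -> (b < c)%N -> (c < N)%N ->
     0 < det4 a4 (z a) (z b) (z c)) ->
  (forall a b, (8 <= a)%N -> (a < b)%N -> (b < N)%N -> 0 < det4 a1 a4 (z a) (z b)) ->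
  tp_seq (box_cols a1 a4 z) (N - 6).
Proof.
move=> TP pos1 pos4 pos14 i j k l ij jk kl lN.
have ge2 := @box_cols_ge2 a1 a4 z.
have [b0 b1] : box_cols a1 a4 z 0 = a1 /\ box_cols a1 a4 z 1 = a4 by [].
rewrite /br (ge2 k) ?(ge2 l); [|lia ..].
case: i ij => [|[|i]] ij.
- rewrite b0; case: j ij jk => [|[|j]] // _ jk; first by rewrite b1; apply: pos14; lia.
  by rewrite ge2 //; apply: pos1; lia.
- by rewrite b1 ge2 //; apply: pos4; lia.
- by rewrite !ge2 //; [apply: TP | ..]; lia.
Qed.

Lemma box_columns_tp (z : nat -> vec R) N (r0 r1 : vec R) :
  (8 <= N)%N -> tp_seq z N -> transversal4 r0 r1 z ->
  exists a1 a4,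
    [/\ on_span r0 r1 a1, on_span r0 r1 a4 & tp_seq (box_cols a1 a4 z) (N - 6)].
Proof.
move=> N8 TP T.
have [l [m [l0 a1L pos1 w1]]] := box_point01 N8 TP T.
have [l' [m' [l'0 a4L pos4 w4]]] := box_point67 TP T.
exists (lincomb m l (z 0%N) (z 1%N)), (lincomb l' m' (z 6%N) (z 7%N)); split => //.
apply: (tp_seq_box_cols TP pos1 pos4) => a b a8 ab bN.
by apply: (box_minor_gt0 TP a8 ab bN l0 l'0); [apply: w4 | apply: w4 | apply: w1 | apply: w1];
  lia.
Qed.

End Brackets.

Section Matrices.
Variable R : realFieldType.

(* Column j of Y and row r of A as vecs; [inord] makes them junk out of range. *)
Definition colv n (Y : 'M[R]_(4, n)) (j : nat) : vec R := fun k => ent Y (inord k) j.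

Definition rowv (A : 'M[R]_(2, 4)) (r : nat) : vec R := fun k => A (inord r) (inord k).

Definition mx_of_cols n (w : nat -> vec R) : 'M[R]_(4, n) := \matrix_(k < 4, j < n) w j k.

Lemma det4E (A : 'M[R]_4) : \det A =
  det4 (fun k => A (inord k) (inord 0)) (fun k => A (inord k) (inord 1))
       (fun k => A (inord k) (inord 2)) (fun k => A (inord k) (inord 3)).
Proof.
pose a r c := A (inord r) (inord c).
have E i j : A i j = a (val i) (val j) by rewrite /a !inord_val.
rewrite (expand_det_col _ ord0) !big_ord_recl big_ord0 /cofactor.
do 2 rewrite !(expand_det_col _ ord0) !big_ord_recl !big_ord0 /cofactor.
by rewrite !det_mx11 !mxE !E /= /a; bracket_ring.
Qed.

Lemma det4_ext (a b c d a' b' c' d' : vec R) :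
  (forall k, (k < 4)%N -> [/\ a k = a' k, b k = b' k, c k = c' k & d k = d' k]) ->
  det4 a b c d = det4 a' b' c' d'.
Proof.
move=> E; have [a0 b0 c0 d0] := E 0%N isT; have [a1 b1 c1 d1] := E 1%N isT.
have [a2 b2 c2 d2] := E 2%N isT; have [a3 b3 c3 d3] := E 3%N isT.
by rewrite /det4 /det3 a0 b0 c0 d0 a1 b1 c1 d1 a2 b2 c2 d2 a3 b3 c3 d3.
Qed.

Lemma ent_ord n (Y : 'M[R]_(4, n)) k (j : 'I_n) : ent Y k j = Y k j.
Proof. by rewrite /ent valK. Qed.

Lemma ent_mx_of_cols n (w : nat -> vec R) (k : 'I_4) j : (j < n)%N ->
  ent (mx_of_cols n w) k j = w j k.
Proof. by move=> jn; rewrite /ent insubT mxE. Qed.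

Lemma ent_colv n (Y : 'M[R]_(4, n)) (k : 'I_4) j : ent Y k j = colv Y j k.
Proof. by rewrite /colv inord_val. Qed.

Lemma det_colsub n (Y : 'M[R]_(4, n)) (f : 'I_4 -> 'I_n) : \det (colsub f Y) =
  det4 (colv Y (f (inord 0))) (colv Y (f (inord 1)))
       (colv Y (f (inord 2))) (colv Y (f (inord 3))).
Proof. by rewrite det4E; apply: det4_ext => k _; rewrite /colv !ent_ord !mxE. Qed.

Lemma totally_positiveP n (Y : 'M[R]_(4, n)) : totally_positive Y <-> tp_seq (colv Y) n.
Proof.
split=> TP.
  move=> i j k l ij jk kl ln; pose s := [:: i; j; k; l].
  have sn (c : 'I_4) : (nth 0 s c < n)%N by case: c => [[|[|[|[|//]]]] ?] /=; lia.
  have := TP (fun c => Ordinal (sn c)); rewrite det_colsub /= !inordK //; apply.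
  by case=> [[|[|[|[|//]]]] ?]; case=> [[|[|[|[|//]]]] ?] //= _; lia.
move=> f fi; rewrite det_colsub; apply: TP; last exact: ltn_ord.
all: by apply: fi; rewrite !inordK.
Qed.

Lemma tp_seq_mx_of_cols n (w : nat -> vec R) :
  tp_seq w n -> totally_positive (mx_of_cols n w).
Proof.
move=> TP; apply/totally_positiveP => i j k l ij jk kl ln.
rewrite /br (det4_ext (a' := w i) (b' := w j) (c' := w k) (d' := w l)); first exact: TP.
by move=> r r4; rewrite /colv !ent_mx_of_cols ?inordK //; lia.
Qed.

Lemma sub_row2P (A : 'M[R]_(2, 4)) (v : 'rV[R]_4) : reflect
  (exists c c', forall k, v 0 k = c * A (inord 0) k + c' * A (inord 1) k) (v <= A)%MS.
Proof.
have [-> ->] : inord 0 = ord0 :> 'I_2 /\ inord 1 = lift ord0 ord0 :> 'I_2.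
  by split; apply: val_inj; rewrite /= inordK.
apply: (iffP submxP) => [[x ->] | [c [c' vA]]].
  by exists (x 0 ord0), (x 0 (lift ord0 ord0)) => k; rewrite !mxE big_ord_recl big_ord1.
exists (\row_r (if r == ord0 then c else c')); apply/rowP => k.
by rewrite vA !mxE big_ord_recl big_ord1 !mxE.
Qed.

Lemma lines_meet_spans_meet (A B : 'M[R]_(2, 4)) : lines_meet A B ->
  spans_meet (rowv A 0) (rowv A 1) (rowv B 0) (rowv B 1).
Proof.
rewrite /lines_meet lt0n mxrank_eq0 => nz.
have [r vnz] : exists r, row r (A :&: B)%MS != 0.
  apply/existsP; apply: contraR nz => /existsPn H.
  by apply/eqP/row_matrixP => r; rewrite row0; apply/eqP/negPn/(H r).
have /sub_row2P[c [c' vA]] := submx_trans (row_sub r _) (capmxSl A B).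
have /sub_row2P[e [e' vB]] := submx_trans (row_sub r _) (capmxSr A B).
have coef_nz (M : 'M[R]_(2, 4)) p q :
    (forall k, row r (A :&: B)%MS 0 k = p * M (inord 0) k + q * M (inord 1) k) ->
    (p != 0) || (q != 0).
  move=> E; apply: contraNT vnz => /norP[/negPn/eqP p0 /negPn/eqP q0].
  by apply/eqP/rowP => k; rewrite E p0 q0 !mul0r addr0 mxE.
exists c, c', e, e'; split; [exact: coef_nz vA | exact: coef_nz vB |].
by apply: functional_extensionality => k; rewrite /lincomb /rowv -vA -vB.
Qed.

Lemma rowv_span2 n (Y : 'M[R]_(4, n)) j j' :
  rowv (span2 Y j j') 0 = colv Y j /\ rowv (span2 Y j j') 1 = colv Y j'.
Proof. by split; apply: functional_extensionality => k; rewrite /rowv mxE /= inordK. Qed.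

Lemma span2_not_meet n (Y : 'M[R]_(4, n)) j : totally_positive Y -> (j.+3 < n)%N ->
  ~ lines_meet (span2 Y j j.+1) (span2 Y j.+2 j.+3).
Proof.
move=> /totally_positiveP TP jn /lines_meet_spans_meet.
have [-> ->] := rowv_span2 Y j j.+1; have [-> ->] := rowv_span2 Y j.+2 j.+3.
by move/spans_meet_det; apply/eqP; rewrite lt0r_neq0 //; apply: TP.
Qed.

Lemma lines_meet_eqmx (A A' B B' : 'M[R]_(2, 4)) : (A == A')%MS -> (B == B')%MS ->
  lines_meet A B -> lines_meet A' B'.
Proof.
move=> /andP[AA' _] /andP[BB' _]; rewrite /lines_meet => h.
by apply: leq_trans h _; apply/mxrankS/capmxS.
Qed.

Lemma positive_config_of_tp m (Y : 'M[R]_(4, 2 * m)) (L : nat -> 'M[R]_(2, 4)) :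
  totally_positive Y -> (forall i, (i < m)%N -> (L i == span2 Y (2 * i) (2 * i).+1)%MS) ->
  positive_config m L.
Proof.
move=> TPY LY; exists (2 * m)%N, Y, (fun i => 2 * i)%N.
do 2 (split; first done); split; first by move=> i _; lia.
split; first by move=> i; lia.
do 2 (split; first done).
move=> i im /(lines_meet_eqmx (LY i (ltnW im)) (LY i.+1 im)); rewrite mulnS.
by move/span2_not_meet; case; [apply: TPY | lia].
Qed.

Lemma span2_ext n n' (Y : 'M[R]_(4, n)) (Z : 'M[R]_(4, n')) j j' i i' :
  (forall k, ent Y k j = ent Z k i) -> (forall k, ent Y k j' = ent Z k i') ->
  span2 Y j j' = span2 Z i i'.
Proof. by move=> E E'; apply/matrixP => r k; rewrite !mxE E E'. Qed.

Lemma transversal4_of_lines_meet n (Z : 'M[R]_(4, n)) (L : 'M[R]_(2, 4)) :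
  (forall i, (i < 4)%N -> lines_meet L (span2 Z (2 * i) (2 * i).+1)) ->
  transversal4 (rowv L 0) (rowv L 1) (colv Z).
Proof.
move=> meet; have M i : (i < 4)%N ->
    spans_meet (rowv L 0) (rowv L 1) (colv Z (2 * i)) (colv Z (2 * i).+1).
  by move/meet/lines_meet_spans_meet; have [-> ->] := rowv_span2 Z (2 * i) (2 * i).+1.
by split; [apply: (M 0%N) | apply: (M 1%N) | apply: (M 2%N) | apply: (M 3%N)].
Qed.

Lemma eqmx_span2 n (Y : 'M[R]_(4, n)) (L : 'M[R]_(2, 4)) j j' (a1 a4 u v : vec R) :
  (forall k : 'I_4, ent Y k j = a1 k) -> (forall k : 'I_4, ent Y k j' = a4 k) ->
  on_span (rowv L 0) (rowv L 1) a1 -> on_span (rowv L 0) (rowv L 1) a4 ->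
  det4 a1 a4 u v != 0 -> (L == span2 Y j j')%MS.
Proof.
move=> Ej Ej' [p [q a1E]] [s [t a4E]] dn.
have Dn : p * t - q * s != 0.
  apply: contraNneq dn => D0; rewrite a1E a4E.
  rewrite (_ : det4 _ _ _ _ = (p * t - q * s) * det4 (rowv L 0) (rowv L 1) u v);
    [by rewrite D0 mul0r | bracket_ring].
have ord2 (r : 'I_2) : r = inord 0 \/ r = inord 1.
  by case: r => [[|[|//]] hr]; [left | right]; apply: val_inj; rewrite /= inordK.
have [S0 S1] :
    (forall k, span2 Y j j' (inord 0) k = p * L (inord 0) k + q * L (inord 1) k) /\
    (forall k, span2 Y j j' (inord 1) k = s * L (inord 0) k + t * L (inord 1) k).
  by split=> k; rewrite mxE /= inordK //= ?Ej ?Ej' ?a1E ?a4E /lincomb /rowv !inord_val.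
apply/andP; split; apply/row_subP => r; apply/sub_row2P; case: (ord2 r) => ->.
- by exists (t / (p * t - q * s)), (- q / (p * t - q * s)) => k; rewrite mxE S0 S1; field.
- by exists (- s / (p * t - q * s)), (p / (p * t - q * s)) => k; rewrite mxE S0 S1; field.
- by exists p, q => k; rewrite mxE S0.
- by exists s, t => k; rewrite mxE S1.
Qed.

End Matrices.

Unset Implicit Arguments.

Theorem lemma9p3 (R : realType) (d : nat) (Z : 'M[R]_(4, 2 * d))
    (L : 'M[R]_(2, 4)) :
  (5 <= d)%N ->
  totally_positive Z ->
  \rank L = 2%N ->
  (forall i : nat, (i < 4)%N -> lines_meet L (span2 Z (2 * i) (2 * i).+1)) ->
  positive_config (d - 3)
    (fun i : nat => if i == 0%N then L
                    else span2 Z (2 * (i + 3)) (2 * (i + 3)).+1).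
Proof.
(* The rank hypothesis is implied by the others: L turns out to be span(a1, a4). *)
move=> d5 TPZ _ meetL; have d8 : (8 <= 2 * d)%N by lia.
have [a1 [a4 [a1L a4L TPw]]] := box_columns_tp d8 ((totally_positiveP Z).1 TPZ)
  (transversal4_of_lines_meet meetL).
pose w := box_cols a1 a4 (colv Z); pose Y := mx_of_cols (2 * (d - 3)) w.
apply: (positive_config_of_tp (Y := Y)).
  by apply: tp_seq_mx_of_cols; rewrite (_ : 2 * (d - 3) = 2 * d - 6)%N //; lia.
move=> i id3; case: eqP => [-> | /eqP i0].
  rewrite muln0; apply: (eqmx_span2 (u := colv Z 8) (v := colv Z 9) _ _ a1L a4L).
  - by move=> k; rewrite ent_mx_of_cols //; lia.
  - by move=> k; rewrite ent_mx_of_cols //; lia.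
  - by apply: lt0r_neq0; apply: (TPw 0 1 2 3); lia.
rewrite (@span2_ext _ _ _ Y Z (2 * i) (2 * i).+1 (2 * (i + 3)) (2 * (i + 3)).+1) => [|k|k].
- by apply/eqmxP.
all: by rewrite ent_mx_of_cols /w ?box_cols_ge2 ?ent_colv; [congr (colv Z _ k) | ..]; lia.
Qed.
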